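(* Let $\mathcal{H}$ be a finite-dimensional complex Hilbert space and let $U,V$ be unitary operators on $\mathcal{H}$ satisfying $V^{-1}U^2V=U^3$. Then $UV^{-1}UV=V^{-1}UVU$. *)

(* Finite-dimensional complex Hilbert spaces are modelled as
   C^n with the standard inner product, operators as n x n matrices over a
   numClosedFieldType C (e.g. algC), unitarity via mathcomp's spectral.unitarymx. *)
From HB Require Import structures.
From mathcomp Require Import all_boot all_order all_algebra.
From mathcomp Require Export spectral.
Set Implicit Arguments. Unset Strict Implicit. Unset Printing Implicit Defensive.

From HB Require Import structures.
From mathcomp Require Import all_boot all_order all_algebra.
From mathcomp Require Import spectral zify.
Import GRing.Theory Num.Theory.
Local Open Scope ring_scope.

(* Write W := V^-1 U V; the hypothesis says W^2 = U^3.
   1. U is unitary, hence normal, hence U = P^-1 diag(d) P.  Since U^2 and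
      U^3 are similar, the spectra {d_i^2} and {d_i^3} coincide: every d_i^3
      is some d_j^2 and every d_i^2 is some d_j^3.
   2. A purely arithmetic argument on such a finite family of nonzero
      scalars (pigeonhole on the map i |-> j) shows that all d_i are roots of
      unity, with a common order N; dividing out the factors 2 and 3 using the
      two matching relations, N can be chosen coprime to 6.  Hence U^N = 1,
      and so W^N = 1 as well.
   3. In any ring, if x^N = 1 and k is coprime to N, then x is a power of
      x^k.  So U is a power of U^3 and W is a power of W^2 = U^3: U and W
      commute, which is the claim UW = WU once W is unfolded. *)

(* If x^N = 1 and k > 0 is coprime to N, then x lies in the cyclic monoid
   generated by x^k: k is invertible modulo N. *)
Lemma power_of_coprime_power {R : pzRingType} {x : R} {k N : nat} :
  coprime k N -> (0 < k)%N -> x ^+ N = 1 -> exists e, (x ^+ k) ^+ e = x.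
Proof.
move=> cop_kN k_gt0 xN; have [[a b] /= bezout] := coprimeP _ k_gt0 cop_kN.
exists a; rewrite -exprM mulnC.
have -> : (a * k = 1 + b * N)%N by lia.
by rewrite exprD expr1 mulnC exprM xN expr1n mulr1.
Qed.

(* Two elements of N-torsion with w^2 = u^3 commute when N is coprime to 6:
   both are powers of u^3. *)
Lemma commute_of_sq_cube {R : pzRingType} {u w : R} {N : nat} :
  coprime 6 N -> u ^+ N = 1 -> w ^+ N = 1 -> w ^+ 2 = u ^+ 3 -> u * w = w * u.
Proof.
rewrite -[6%N]/(2 * 3)%N coprimeMl => /andP[cop2 cop3] uN wN w2u3.
have [a ua] := power_of_coprime_power cop3 isT uN.
have [b wb] := power_of_coprime_power cop2 isT wN.
by rewrite -ua -wb w2u3 -!exprM -!exprD addnC.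
Qed.

Section ScalarFamilies.

Context {D : idomainType} {n : nat} {x : 'I_n -> D}.

(* Iterating i |-> j gives
   x_i^(3^m) = x_(f^m i)^(2^m); by pigeonhole f^m1 i = f^m2 i with m1 < m2,
   so z := x_i^(3^m1) satisfies z^(3^p) = z^(2^p) with p = m2 - m1. *)
Lemma root_of_unity_of_cubes_squares (x_neq0 : forall i, x i != 0)
    (cube_square : forall i, exists j, x i ^+ 3 = x j ^+ 2) (i : 'I_n) :
  exists2 M, (0 < M)%N & x i ^+ M = 1.
Proof.
have [f hf] := fin_all_exists cube_square.
have iterate m : x i ^+ (3 ^ m) = x (iter m f i) ^+ (2 ^ m).
  elim: m => [|m IH]; first by rewrite !expn0.
  by rewrite expnSr exprM IH -exprM mulnC exprM hf -exprM mulnC -expnSr.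
pose g (m : 'I_n.+1) := iter m f i.
have [m1 [m2 [m12_neq g12]]] : exists m1 m2 : 'I_n.+1, m1 != m2 /\ g m1 = g m2.
  have /injectivePn[m1 [m2 neq12 eq12]] : ~~ injectiveb g.
    by apply/negP => /injectiveP/leq_card; rewrite !card_ord ltnn.
  by exists m1, m2.
wlog lt_m12 : m1 m2 m12_neq g12 / (m1 < m2)%N.
  move=> W; case: (ltngtP m1 m2) => [|lt_m21|/val_inj eq12]; first exact: W.
  - by apply: (W m2 m1); rewrite // eq_sym.
  - by rewrite eq12 eqxx in m12_neq.
set p := (m2 - m1)%N; set z := x i ^+ (3 ^ m1).
have m2E : (m2 : nat) = (m1 + p)%N by rewrite subnKC // ltnW.
have z_period : z ^+ (3 ^ p) = z ^+ (2 ^ p).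
  rewrite /z -!exprM -expnD -m2E iterate -/(g m2) -g12.
  by rewrite exprM (iterate m1) -exprM -expnD -m2E.
have lt_pow : (2 ^ p < 3 ^ p)%N by rewrite ltn_exp2r // subn_gt0.
exists (3 ^ m1 * (3 ^ p - 2 ^ p))%N; first by rewrite muln_gt0 expn_gt0 subn_gt0.
have z_neq0 : z ^+ (2 ^ p) != 0 by rewrite !expf_neq0.
rewrite exprM -/z; apply: (mulIf z_neq0).
by rewrite -exprD subnK 1?ltnW // z_period mul1r.
Qed.

Lemma common_order (roots : forall i, exists2 M, (0 < M)%N & x i ^+ M = 1) :
  exists2 M, (0 < M)%N & forall i, x i ^+ M = 1.
Proof.
have /fin_all_exists[F hF] : forall i, exists M, (0 < M)%N && (x i ^+ M == 1).
  by move=> i; have [M M_gt0 xM] := roots i; exists M; rewrite M_gt0 xM eqxx.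
exists (\prod_i F i)%N; first by apply: prodn_gt0 => i; case/andP: (hF i).
move=> j; rewrite (bigD1 j) //= exprM.
by case/andP: (hF j) => _ /eqP ->; rewrite expr1n.
Qed.

(* When squares and cubes of the family match both ways, a common order can
   be taken coprime to 6: if M = 2k, then x_i^(3k) = x_j^M = 1 and
   x_i^(2k) = 1, so x_i^k = 1; the case M = 3k is symmetric. *)
Lemma common_order_coprime6
    (cube_square : forall i, exists j, x i ^+ 3 = x j ^+ 2)
    (square_cube : forall i, exists j, x i ^+ 2 = x j ^+ 3) {M : nat} :
  (0 < M)%N -> (forall i, x i ^+ M = 1) ->
  exists2 N, coprime 6 N & forall i, x i ^+ N = 1.
Proof.
have split_exp i k : x i ^+ (3 * k) = x i ^+ k * x i ^+ (2 * k).
  by rewrite -exprD; congr (_ ^+ _); lia.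
elim/ltn_ind: M => M IH M_gt0 xM.
have [/dvdnP[k Mk] | not2] := boolP (2 %| M)%N.
  apply: (IH k); [lia | lia | move=> i].
  have [j xij] := cube_square i.
  have := split_exp i k.
  by rewrite exprM xij -exprM mulnC -Mk !xM mulr1 => <-.
have [/dvdnP[k Mk] | not3] := boolP (3 %| M)%N.
  apply: (IH k); [lia | lia | move=> i].
  have [j xij] := square_cube i.
  have := split_exp i k.
  by rewrite (exprM _ 2) xij -exprM mulnC -Mk !xM mulr1 => ->.
exists M => //.
by rewrite -[6%N]/(2 * 3)%N coprimeMl !prime_coprime // not2 not3.
Qed.

Lemma root_match (y z : 'I_n -> D)
    (same_prod : forall l, \prod_k (y k - l) = \prod_k (z k - l)) (i : 'I_n) :
  exists j, z i = y j.
Proof.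
have /prodf_eq0[j _] : \prod_k (y k - z i) == 0.
  by rewrite same_prod; apply/prodf_eq0; exists i; rewrite ?subrr.
by rewrite subr_eq0 => /eqP <-; exists j.
Qed.

End ScalarFamilies.

Lemma conjmx_expr (R : comUnitRingType) n (P A : 'M[R]_n) (k : nat) :
  P \in unitmx -> (invmx P *m A *m P) ^+ k = invmx P *m A ^+ k *m P.
Proof.
move=> P_unit; elim: k => [|k IH]; first by rewrite !expr0 mulmx1 mulVmx.
by rewrite !exprSr IH -!mulmxE !mulmxA mulmxK.
Qed.

Lemma det_conj_sub_scalar (R : comUnitRingType) n (P A : 'M[R]_n) (l : R) :
  P \in unitmx -> \det (invmx P *m A *m P - l%:M) = \det (A - l%:M).
Proof.
move=> P_unit.
have -> : invmx P *m A *m P - l%:M = invmx P *m (A - l%:M) *m P.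
  by rewrite mulmxBr mulmxBl scalar_mxC mulmxKV.
by rewrite !det_mulmx det_inv mulrAC mulVr ?mul1r.
Qed.

Section NormalMatrix.

Context {C : numClosedFieldType} {n : nat} {U : 'M[C]_n}.
Hypothesis U_normal : U \is normalmx.

Let P := spectralmx U.
Let d := spectral_diag U.

Lemma normal_expr (m : nat) :
  U ^+ m = invmx P *m diag_mx (\row_k (d 0 k ^+ m)) *m P.
Proof.
rewrite {1}(orthomx_spectralP U_normal) conjmx_expr ?spectral_unit //.
congr (_ *m _ *m _); elim: m => [|m IH].
  by rewrite expr0 -[1]/(1%:M) -diag_const_mx; congr diag_mx; apply/rowP => j; rewrite !mxE.
by rewrite exprSr IH -mulmxE mulmx_diag; congr diag_mx; apply/rowP => j;
  rewrite !mxE exprSr.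
Qed.

Lemma normal_det_expr_sub (m : nat) (l : C) :
  \det (U ^+ m - l%:M) = \prod_k (d 0 k ^+ m - l).
Proof.
rewrite normal_expr det_conj_sub_scalar ?spectral_unit //.
have -> : diag_mx (\row_k (d 0 k ^+ m)) - l%:M = diag_mx (\row_k (d 0 k ^+ m - l)).
  by apply/matrixP => i j; rewrite !mxE; case: eqP; rewrite ?mulr1n ?mulr0n ?subr0.
by rewrite det_diag; apply: eq_bigr => k _; rewrite mxE.
Qed.

Lemma normal_unit_eigen_neq0 : U \in unitmx -> forall i, d 0 i != 0.
Proof.
rewrite unitmxE unitfE => detU_neq0 i.
have := normal_det_expr_sub 1 0; rewrite expr1 raddf0 subr0 => detU.
by move: detU_neq0; rewrite detU => /prodf_neq0/(_ i isT); rewrite expr1 subr0.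
Qed.

Lemma normal_expr_eq1 {N : nat} : (forall i, d 0 i ^+ N = 1) -> U ^+ N = 1.
Proof.
move=> dN; rewrite normal_expr.
have -> : \row_k d 0 k ^+ N = const_mx 1 by apply/rowP => k; rewrite !mxE dN.
by rewrite diag_const_mx mulmx1 mulVmx ?spectral_unit.
Qed.

End NormalMatrix.

Lemma unitarymx_normal {C : numClosedFieldType} {n} {U : 'M[C]_n} :
  U \is unitarymx -> U \is normalmx.
Proof.
move=> U_unitary; apply/normalmxP.
by rewrite (unitarymxP U_unitary) -(invmx_unitary U_unitary) mulVmx ?unitarymx_unit.
Qed.

Theorem theorem1 (C : numClosedFieldType) (n : nat) (U V : 'M[C]_n)
  (hU : U \is unitarymx) (hV : V \is unitarymx)
  (hrel : invmx V *m (U *m U) *m V = U *m U *m U) :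
  U *m invmx V *m U *m V = invmx V *m U *m V *m U.
Proof.
have V_unit := unitarymx_unit hV.
have U_normal := unitarymx_normal hU.
set d := spectral_diag U; set W := invmx V *m U *m V.
have W_expr m : W ^+ m = invmx V *m U ^+ m *m V by rewrite conjmx_expr.
have W2U3 : W ^+ 2 = U ^+ 3.
  by rewrite W_expr expr2 exprS expr2 -!mulmxE hrel mulmxA.
have charU23 l : \det (U ^+ 2 - l%:M) = \det (U ^+ 3 - l%:M).
  by rewrite -W2U3 W_expr det_conj_sub_scalar.
have cube_square i : exists j, d 0 i ^+ 3 = d 0 j ^+ 2.
  by apply: (root_match (fun k => d 0 k ^+ 2) (fun k => d 0 k ^+ 3)) => l; rewrite -!(normal_det_expr_sub U_normal) charU23.
have square_cube i : exists j, d 0 i ^+ 2 = d 0 j ^+ 3.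
  by apply: (root_match (fun k => d 0 k ^+ 3) (fun k => d 0 k ^+ 2)) => l; rewrite -!(normal_det_expr_sub U_normal) charU23.
have d_neq0 := normal_unit_eigen_neq0 U_normal (unitarymx_unit hU).
have [M M_gt0 dM] := common_order (root_of_unity_of_cubes_squares d_neq0 cube_square).
have [N cop6 dN] := common_order_coprime6 cube_square square_cube M_gt0 dM.
have UN : U ^+ N = 1 := normal_expr_eq1 U_normal dN.
have WN : W ^+ N = 1 by rewrite W_expr UN mulmx1 mulVmx.
have := commute_of_sq_cube cop6 UN WN W2U3.
by rewrite /W -!mulmxE !mulmxA.
Qed.
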